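(* Let $K$ be a commutative field, let $q\in K$, and let $\mathcal{H}_{\mathcal{PP}}$ be the $K$-vector space with basis the set $\mathcal{PP}$ of isomorphism classes of plane posets. Define $\Delta_q:\mathcal{H}_{\mathcal{PP}}\to\mathcal{H}_{\mathcal{PP}}\otimes\mathcal{H}_{\mathcal{PP}}$ linearly by $$\Delta_q(P)=\sum_{I \text{ biideal of } P} q^{h(P\setminus I,\,I)}\,(P\setminus I)\otimes I,\qquad h(A,B)=\sharp\{(x,y)\in A\times B\mid x<_h y\},$$ for every plane poset $P$ (with the convention $q^0=1$). Then $\Delta_q$ is coassociative, i.e. $(\Delta_q\otimes \mathrm{Id})\circ\Delta_q=(\mathrm{Id}\otimes\Delta_q)\circ\Delta_q$, and for all plane posets $x,y$, writing $\Delta_q(x)=\sum x^{(1)}\otimes x^{(2)}$ and $\Delta_q(y)=\sum y^{(1)}\otimes y^{(2)}$ as sums of scalar multiples of tensors of plane posets, and $|\cdot|$ for cardinality: $$\Delta_q(xy)=\sum x^{(1)}\otimes x^{(2)}y+\sum xy^{(1)}\otimes y^{(2)}-x\otimes y,$$ $$\Delta_q(x\triangleleft y)=\sum q^{|x^{(1)}||y|}\,x^{(1)}\otimes x^{(2)}\triangleleft y+\sum q^{|x||y^{(2)}|}\,x\triangleleft y^{(1)}\otimes y^{(2)}-q^{|x||y|}\,x\otimes y.$$ Hence $(\mathcal{H}_{\mathcal{PP}},m,\Delta_q)$ is an infinitesimal Hopf algebra for every $q$, as well as $(\mathcal{H}_{\mathcal{PP}},\triangleleft,\Delta_1)$, where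 an infinitesimal Hopf algebra is an associative unital algebra with a coassociative coproduct $\Delta$ satisfying $\Delta(ab)=\Delta(a)(1\otimes b)+(a\otimes 1)\Delta(b)-a\otimes b$.
   Context: A plane poset is a finite set $P$ with two partial orders $\leq_h$ and $\leq_r$ such that for all $x\neq y$ in $P$, $x$ and $y$ are comparable for $\leq_h$ if and only if they are not comparable for $\leq_r$. Plane posets are considered up to isomorphism (bijections preserving both orders); the empty plane poset is denoted $1$. A subset of a plane poset, with the restricted orders, is again a plane poset (a plane subposet). A subset $I\subseteq P$ is a biideal of $P$ if for all $x,y\in P$, ($x\in I$ and $x\leq_h y$) implies $y\in I$, and ($x\in I$ and $x\leq_r y$) implies $y\in I$. For plane posets $P,Q$: the product $PQ$ (denoted $m$) is the plane poset on $P\sqcup Q$ in which $P,Q$ are plane subposets, no element of $P$ is $\leq_h$-comparable with an element of $Q$, and $x<_r y$ for all $x\in P$, $y\in Q$; the product $P\triangleleft Q$ is the plane poset on $P\sqcup Q$ in which $P,Q$ are plane subposets, no element of $P$ is $\leq_r$-comparable with an element of $Q$, and $x<_h y$ for all $x\in P,y\in Q$. Both products are extended bilinearly to $\mathcal{H}_{\mathcal{PP}}$; they are associative with unit $1$. *)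

From mathcomp Require Import all_boot all_order all_algebra.
Set Implicit Arguments. Unset Strict Implicit. Unset Printing Implicit Defensive.
Import GRing.Theory.
Local Open Scope ring_scope.

Record pp := PP { ppn : nat; ph : rel 'I_ppn; pr : rel 'I_ppn }.
Arguments ph : clear implicits.
Arguments pr : clear implicits.

Definition porder (n : nat) (R : rel 'I_n) : bool :=
  [&& [forall x, R x x],
      [forall x, forall y, (R x y && R y x) ==> (x == y)] &
      [forall x, forall y, forall z, (R x y && R y z) ==> R x z]].

Definition plane (P : pp) : bool :=
  [&& porder (ph P), porder (pr P) &
      [forall x, forall y, (x != y) ==>
         ((ph P x y || ph P y x) == ~~ (pr P x y || pr P y x))]].

Definition iso (P Q : pp) : bool :=
  (ppn P == ppn Q) &&
  [exists f : {ffun 'I_(ppn P) -> 'I_(ppn Q)},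
     injectiveb f &&
     [forall x, forall y, (ph P x y == ph Q (f x) (f y)) &&
                          (pr P x y == pr Q (f x) (f y))]].

Definition subpp (P : pp) (S : {set 'I_(ppn P)}) : pp :=
  @PP #|S| (fun i j => ph P (enum_val i) (enum_val j))
           (fun i j => pr P (enum_val i) (enum_val j)).

Definition biideal (P : pp) (I : {set 'I_(ppn P)}) : bool :=
  [forall x, forall y, ((x \in I) && ph P x y) ==> (y \in I)] &&
  [forall x, forall y, ((x \in I) && pr P x y) ==> (y \in I)].

Definition pp1 : pp := @PP 0 (fun _ _ => true) (fun _ _ => true).

Definition ppmul (P Q : pp) : pp :=
  @PP (ppn P + ppn Q)
    (fun i j => match split i, split j with
                | inl a, inl b => ph P a b
                | inr a, inr b => ph Q a b
                | _, _ => false end)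
    (fun i j => match split i, split j with
                | inl a, inl b => pr P a b
                | inr a, inr b => pr Q a b
                | inl _, inr _ => true
                | inr _, inl _ => false end).

Definition pptl (P Q : pp) : pp :=
  @PP (ppn P + ppn Q)
    (fun i j => match split i, split j with
                | inl a, inl b => ph P a b
                | inr a, inr b => ph Q a b
                | inl _, inr _ => true
                | inr _, inl _ => false end)
    (fun i j => match split i, split j with
                | inl a, inl b => pr P a b
                | inr a, inr b => pr Q a b
                | _, _ => false end).

(* Elements of H_PP, H_PP⊗H_PP, H_PP⊗H_PP⊗H_PP as formal linear combinations
   of (tuples of) representatives; they are compared through their
   coefficients on isomorphism classes (the basis PP, resp. PP×PP, PP×PP×PP). *)
Section Formal.
Variable K : fieldType.

Definition H := seq (K * pp).
Definition H2 := seq (K * (pp * pp)).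
Definition H3 := seq (K * (pp * pp * pp)).

Definition coef (s : H) (Q : pp) : K :=
  \sum_(t <- s) (if iso t.2 Q then t.1 else 0).
Definition coef2 (s : H2) (Q1 Q2 : pp) : K :=
  \sum_(t <- s) (if iso t.2.1 Q1 && iso t.2.2 Q2 then t.1 else 0).
Definition coef3 (s : H3) (Q1 Q2 Q3 : pp) : K :=
  \sum_(t <- s) (if [&& iso t.2.1.1 Q1, iso t.2.1.2 Q2 & iso t.2.2 Q3]
                 then t.1 else 0).

Definition eqH (s t : H) : Prop :=
  forall Q, plane Q -> coef s Q = coef t Q.
Definition eqH2 (s t : H2) : Prop :=
  forall Q1 Q2, plane Q1 -> plane Q2 -> coef2 s Q1 Q2 = coef2 t Q1 Q2.
Definition eqH3 (s t : H3) : Prop :=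
  forall Q1 Q2 Q3, plane Q1 -> plane Q2 -> plane Q3 ->
    coef3 s Q1 Q2 Q3 = coef3 t Q1 Q2 Q3.

Definition inH (s : H) : bool := all (fun t => plane t.2) s.

Definition hcount (P : pp) (I : {set 'I_(ppn P)}) : nat :=
  #|[set xy : 'I_(ppn P) * 'I_(ppn P) |
      [&& xy.1 \notin I, xy.2 \in I, xy.1 != xy.2 & ph P xy.1 xy.2]]|.

Definition Delta (q : K) (P : pp) : H2 :=
  [seq (q ^+ hcount J, (subpp (~: J), subpp J))
  | J <- enum [pred J : {set 'I_(ppn P)} | biideal J]].

Definition DeltaL (D : pp -> H2) (s : H) : H2 :=
  flatten [seq [seq (t.1 * u.1, u.2) | u <- D t.2] | t <- s].
Definition DeltaId (D : pp -> H2) (s : H2) : H3 :=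
  flatten [seq [seq (t.1 * u.1, (u.2.1, u.2.2, t.2.2)) | u <- D t.2.1] | t <- s].
Definition IdDelta (D : pp -> H2) (s : H2) : H3 :=
  flatten [seq [seq (t.1 * u.1, (t.2.1, u.2.1, u.2.2)) | u <- D t.2.2] | t <- s].

Definition coassociative (D : pp -> H2) : Prop :=
  forall s : H, inH s -> eqH3 (DeltaId D (DeltaL D s)) (IdDelta D (DeltaL D s)).

Definition infinitesimal_hopf (mul : pp -> pp -> pp) (one : pp)
    (D : pp -> H2) : Prop :=
  [/\ forall P Q R, plane P -> plane Q -> plane R ->
        iso (mul (mul P Q) R) (mul P (mul Q R)),
      forall P, plane P -> iso (mul one P) P /\ iso (mul P one) P,
      coassociative D &
      forall a b : H, inH a -> inH b ->
        eqH2 (DeltaL D [seq (u.1 * v.1, mul u.2 v.2) | u <- a, v <- b])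
             ([seq (u.1 * v.1, (u.2.1, mul u.2.2 v.2)) | u <- DeltaL D a, v <- b]
              ++ [seq (u.1 * v.1, (mul u.2 v.2.1, v.2.2)) | u <- a, v <- DeltaL D b]
              ++ [seq (- (u.1 * v.1), (u.2, v.2)) | u <- a, v <- b])].

End Formal.

From mathcomp Require Import all_boot all_order all_algebra.
Set Implicit Arguments. Unset Strict Implicit. Unset Printing Implicit Defensive.
Import GRing.Theory.
Local Open Scope ring_scope.

(* Both products are the concatenation [ppcat c x y] of [x] before [y], with
   [x] below [y] for [<|] (c = true) and [x] left of [y] for [m] (c = false).
   The biideals of [ppcat c x y] are the sets [L ⊔ R] with [L], [R] biideals
   of [x], [y] and [L = ∅] or [R = y]: the two families give the two sums of
   the derivation formula, and [(∅, y)], counted twice, gives the correction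
   term.  In [<|] every element of [x \ L] lies below every element of [R],
   which is the extra power [q^(|x \ L| |R|)].
   For coassociativity, both iterated coproducts of [P] are sums over pairs
   of nested biideals [J ⊆ I] of [P] with weight
   [q^(h(A, B) + h(A, C) + h(B, C))], where [A = P \ I], [B = I \ J],
   [C = J]: [h] is additive in each argument, and the biideals of a plane
   subposet are the traces of biideals of [P] (of [P] itself when the
   subposet is a biideal, after adding [I] when it is [P \ I]). *)

Definition pp_emb (Q P : pp) (f : 'I_(ppn Q) -> 'I_(ppn P)) :=
  injective f /\
  forall i j, ph Q i j = ph P (f i) (f j) /\ pr Q i j = pr P (f i) (f j).
Arguments pp_emb : clear implicits.

Lemma emb_iso Q P f : pp_emb Q P f -> ppn Q = ppn P -> iso Q P.
Proof.
move=> [f_inj f_rel] eqn; apply/andP; split; first exact/eqP.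
apply/existsP; exists [ffun i => f i]; apply/andP; split.
  by apply/injectiveP => i j; rewrite !ffunE; exact: f_inj.
apply/forallP=> i; apply/forallP=> j; rewrite !ffunE.
by case: (f_rel i j) => -> ->; rewrite !eqxx.
Qed.

Lemma iso_emb Q P : iso Q P -> exists2 f, pp_emb Q P f & ppn Q = ppn P.
Proof.
case/andP=> /eqP eqn /existsP [f /andP [/injectiveP f_inj /forallP f_rel]].
exists f => //; split=> [|i j]; first exact: f_inj.
by case/andP: (forallP (f_rel i) j) => /eqP -> /eqP ->.
Qed.

Lemma emb_id P : pp_emb P P id.
Proof. by split. Qed.

Lemma emb_comp R Q P f g : pp_emb R Q f -> pp_emb Q P g -> pp_emb R P (g \o f).
Proof.
move=> [f_inj f_rel] [g_inj g_rel]; split; first exact: inj_comp.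
by move=> i j; case: (f_rel i j) => -> ->; exact: g_rel.
Qed.

Lemma iso_trans P Q R : iso P Q -> iso Q R -> iso P R.
Proof.
move=> /iso_emb [f ef eqPQ] /iso_emb [g eg eqQR].
by apply: emb_iso (emb_comp ef eg) _; rewrite eqPQ.
Qed.

Lemma iso_sym P Q : iso P Q -> iso Q P.
Proof.
move=> /iso_emb [f [f_inj f_rel] eqn].
have [g fK gK] : bijective f by apply: inj_card_bij; rewrite ?card_ord ?eqn.
apply: (@emb_iso _ _ g) => //; split; first exact: can_inj gK.
by move=> i j; have := f_rel (g i) (g j); rewrite !gK; case=> -> ->.
Qed.

Lemma iso_congr A A' Q : iso A A' -> iso A Q = iso A' Q.
Proof.
move=> isoAA'; apply/idP/idP; first exact: iso_trans (iso_sym isoAA').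
exact: iso_trans isoAA'.
Qed.

Lemma emb_enum_val P (S : {set 'I_(ppn P)}) : pp_emb (subpp S) P enum_val.
Proof. by split; [exact: enum_val_inj|]. Qed.

Definition onto_set (m n : nat) (f : 'I_m -> 'I_n) (S : {set 'I_n}) :=
  forall x, x \in S <-> exists i, x = f i.

Lemma enum_val_onto n (S : {set 'I_n}) : onto_set (@enum_val _ (mem S)) S.
Proof.
move=> a; split; first by move=> aS; exists (enum_rank_in aS a); rewrite enum_rankK_in.
by case=> i ->; exact: enum_valP.
Qed.

Lemma id_onto n : onto_set id [set: 'I_n].
Proof. by move=> a; split=> [_|]; [exists a | rewrite inE]. Qed.

Lemma iso_subpp Q P (S : {set 'I_(ppn P)}) f :
  pp_emb Q P f -> onto_set f S -> iso Q (subpp S).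
Proof.
move=> [f_inj f_rel] ontoS.
have fS i : f i \in S by apply/ontoS; exists i.
pose g i : 'I_#|S| := enum_rank_in (fS i) (f i).
have gE i : enum_val (g i) = f i by rewrite enum_rankK_in.
apply: (@emb_iso Q (subpp S) g).
  split; first by move=> i j eqg; apply: f_inj; rewrite -!gE eqg.
  by move=> i j; rewrite /= !gE; exact: f_rel.
have -> : S = f @: setT.
  by apply/setP=> x; apply/idP/imsetP => [/ontoS [i ->]|[i _ ->]]; [exists i|].
by rewrite /= card_imset // cardsT card_ord.
Qed.

Definition ppcat (c : bool) (P Q : pp) : pp :=
  @PP (ppn P + ppn Q)
    (fun i j => match split i, split j with
                | inl a, inl b => ph P a b
                | inr a, inr b => ph Q a b
                | inl _, inr _ => c
                | inr _, inl _ => false end)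
    (fun i j => match split i, split j with
                | inl a, inl b => pr P a b
                | inr a, inr b => pr Q a b
                | inl _, inr _ => ~~ c
                | inr _, inl _ => false end).

Lemma ppmul_ppcat P Q : ppmul P Q = ppcat false P Q. Proof. by []. Qed.
Lemma pptl_ppcat P Q : pptl P Q = ppcat true P Q. Proof. by []. Qed.

Lemma split_lshift m n (a : 'I_m) : split (lshift n a) = inl a.
Proof. exact: (unsplitK (inl a)). Qed.
Lemma split_rshift m n (b : 'I_n) : split (rshift m b) = inr b.
Proof. exact: (unsplitK (inr b)). Qed.

Definition splitE := (split_lshift, split_rshift).

Lemma emb_lshift c X Y : pp_emb X (ppcat c X Y) (lshift (ppn Y)).
Proof. by split; [exact: lshift_inj | move=> i j; rewrite /= !splitE]. Qed.
Lemma emb_rshift c X Y : pp_emb Y (ppcat c X Y) (@rshift (ppn X) (ppn Y)).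
Proof. by split; [exact: rshift_inj | move=> i j; rewrite /= !splitE]. Qed.

Lemma emb_ppcat c X Y Z fX fY : pp_emb X Z fX -> pp_emb Y Z fY ->
  (forall a b, fX a != fY b) ->
  (forall a b, [/\ ph Z (fX a) (fY b) = c, pr Z (fX a) (fY b) = ~~ c,
                   ph Z (fY b) (fX a) = false & pr Z (fY b) (fX a) = false]) ->
  pp_emb (ppcat c X Y) Z
    (fun i => match split i with inl a => fX a | inr b => fY b end).
Proof.
move=> [fX_inj fX_rel] [fY_inj fY_rel] neqXY relXY; split.
  move=> i j; rewrite -(splitK i) -(splitK j) !unsplitK.
  case: (split i) => a; case: (split j) => b /= eqf.
  - by rewrite (fX_inj _ _ eqf).
  - by move: (neqXY a b); rewrite eqf eqxx.
  - by move: (neqXY b a); rewrite eqf eqxx.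
  - by rewrite (fY_inj _ _ eqf).
move=> i j; rewrite -(splitK i) -(splitK j) /= !unsplitK.
case: (split i) => a; case: (split j) => b /=.
- exact: fX_rel.
- by case: (relXY a b).
- by case: (relXY b a).
- exact: fY_rel.
Qed.

Lemma ppcat_unitl c P : iso (ppcat c pp1 P) P.
Proof. exact/iso_sym/(emb_iso (emb_rshift c pp1 P)). Qed.

Lemma ppcat_unitr c P : iso (ppcat c P pp1) P.
Proof. by apply/iso_sym/(emb_iso (emb_lshift c P pp1)); rewrite /= addn0. Qed.

Lemma ppcat_assoc c P Q R :
  iso (ppcat c (ppcat c P Q) R) (ppcat c P (ppcat c Q R)).
Proof.
pose Z := ppcat c P (ppcat c Q R).
pose fQ := @rshift (ppn P) (ppn Q + ppn R) \o lshift (ppn R).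
pose fR := @rshift (ppn P) (ppn Q + ppn R) \o @rshift (ppn Q) (ppn R).
have ePQ : pp_emb (ppcat c P Q) Z
    (fun i => match split i with inl a => lshift _ a | inr b => fQ b end).
  apply: emb_ppcat; first exact: emb_lshift.
  - exact: emb_comp (emb_lshift c Q R) (emb_rshift c P _).
  - by move=> a b; rewrite /= eq_lrshift.
  - by move=> a b; rewrite /= !splitE.
have eR : pp_emb R Z fR by exact: emb_comp (emb_rshift c Q R) (emb_rshift c P _).
apply: (emb_iso (emb_ppcat ePQ eR _ _)); last by rewrite /= addnA.
  move=> a b; rewrite -(splitK a); case: (split a) => a' /=; rewrite ?splitE.
    by rewrite eq_lrshift.
  by rewrite (inj_eq (@rshift_inj _ _)) eq_lrshift.
by move=> a b; rewrite -(splitK a); case: (split a) => a' /=; rewrite !splitE.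
Qed.

Definition catset nx ny (L : {set 'I_nx}) (R : {set 'I_ny}) : {set 'I_(nx + ny)} :=
  lshift ny @: L :|: @rshift nx ny @: R.

Lemma mem_catset_l nx ny L R a : (lshift ny a \in @catset nx ny L R) = (a \in L).
Proof.
rewrite in_setU (mem_imset _ _ (@lshift_inj _ _)).
by case: (a \in L) => //=; apply/imsetP => -[b _ /eqP]; rewrite eq_lrshift.
Qed.

Lemma mem_catset_r nx ny L R b : (@rshift nx ny b \in @catset nx ny L R) = (b \in R).
Proof.
rewrite in_setU (mem_imset _ _ (@rshift_inj _ _)) orbC.
by case: (b \in R) => //=; apply/imsetP => -[a _ /eqP]; rewrite eq_rlshift.
Qed.

Definition mem_catset := (mem_catset_l, mem_catset_r).

Lemma setC_catset nx ny (L : {set 'I_nx}) (R : {set 'I_ny}) :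
  ~: catset L R = catset (~: L) (~: R).
Proof.
by apply/setP => z; rewrite -(splitK z); case: (split z) => a /=;
  rewrite inE !mem_catset inE.
Qed.

Lemma catset_bij nx ny :
  bijective (fun p : {set 'I_nx} * {set 'I_ny} => catset p.1 p.2).
Proof.
exists (fun I : {set 'I_(nx + ny)} =>
  ([set a | lshift ny a \in I], [set b | rshift nx b \in I])).
  by move=> [L R] /=; congr (_, _); apply/setP => a; rewrite inE mem_catset.
by move=> I; apply/setP => z; rewrite -(splitK z); case: (split z) => a /=;
  rewrite mem_catset inE.
Qed.

Section CatSubposets.
Variables (c : bool) (x y : pp).
Local Notation P := (ppcat c x y).

Lemma iso_subpp_catset X Y fX fY (L : {set 'I_(ppn x)}) (R : {set 'I_(ppn y)}) :
  pp_emb X x fX -> pp_emb Y y fY -> onto_set fX L -> onto_set fY R ->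
  iso (ppcat c X Y) (subpp (P := P) (catset L R)).
Proof.
move=> eX eY ontoL ontoR.
apply: (iso_subpp (emb_ppcat (emb_comp eX (emb_lshift c x y))
                             (emb_comp eY (emb_rshift c x y)) _ _)).
- by move=> a b; rewrite /= eq_lrshift.
- by move=> a b; rewrite /= !splitE.
- move=> z; rewrite -(splitK z); case: (split z) => a /=; rewrite mem_catset.
    apply: iff_trans (ontoL a) _; split=> -[i eqa].
      by exists (lshift (ppn Y) i); rewrite splitE eqa.
    move: eqa; rewrite -(splitK i); case: (split i) => b /=; rewrite !splitE.
      by move/lshift_inj ->; exists b.
    by move/eqP; rewrite eq_lrshift.
  apply: iff_trans (ontoR a) _; split=> -[i eqa].
    by exists (rshift (ppn X) i); rewrite splitE eqa.
  move: eqa; rewrite -(splitK i); case: (split i) => b /=; rewrite !splitE.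
    by move/eqP; rewrite eq_rlshift.
  by move/rshift_inj ->; exists b.
Qed.

Lemma iso_subpp_catset_l X fX (L : {set 'I_(ppn x)}) :
  pp_emb X x fX -> onto_set fX L -> iso X (subpp (P := P) (catset L set0)).
Proof.
move=> eX ontoL; apply: (iso_subpp (emb_comp eX (emb_lshift c x y))).
move=> z; rewrite -(splitK z); case: (split z) => a /=; rewrite mem_catset.
  by apply: iff_trans (ontoL a) _; split=> -[i eqa]; exists i; [rewrite eqa | move: eqa => /lshift_inj].
by rewrite inE; split=> // -[i /eqP]; rewrite eq_rlshift.
Qed.

Lemma iso_subpp_catset_r Y fY (R : {set 'I_(ppn y)}) :
  pp_emb Y y fY -> onto_set fY R -> iso Y (subpp (P := P) (catset set0 R)).
Proof.
move=> eY ontoR; apply: (iso_subpp (emb_comp eY (emb_rshift c x y))).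
move=> z; rewrite -(splitK z); case: (split z) => a /=; rewrite mem_catset.
  by rewrite inE; split=> // -[i /eqP]; rewrite eq_lrshift.
by apply: iff_trans (ontoR a) _; split=> -[i eqa]; exists i; [rewrite eqa | move: eqa => /rshift_inj].
Qed.

End CatSubposets.

Lemma biidealP P (I : {set 'I_(ppn P)}) :
  reflect (forall a b, a \in I -> ph P a b || pr P a b -> b \in I) (biideal I).
Proof.
apply: (iffP andP) => [[/forallP hI /forallP rI] a b aI /orP[hab|rab]|closedI].
- by have /forallP/(_ b) := hI a; rewrite aI hab.
- by have /forallP/(_ b) := rI a; rewrite aI rab.
by split; apply/forallP=> a; apply/forallP=> b; apply/implyP=> /andP[aI ab];
  apply: closedI aI _; rewrite ab ?orbT.
Qed.

Lemma biideal_set0 P : biideal (P := P) set0.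
Proof. by apply/biidealP => a b; rewrite !inE. Qed.

Lemma biideal_setT P : biideal (P := P) setT.
Proof. by apply/biidealP => a b; rewrite !inE. Qed.

Lemma biideal_catset c x y (L : {set 'I_(ppn x)}) (R : {set 'I_(ppn y)}) :
  biideal (P := ppcat c x y) (catset L R) =
  [&& biideal L, biideal R & (L == set0) || (R == setT)].
Proof.
apply/biidealP/and3P => [closedLR|[/biidealP closedL /biidealP closedR LR]].
  split.
  - by apply/biidealP => a b; have := closedLR (lshift _ a) (lshift _ b);
      rewrite !mem_catset /= !splitE.
  - by apply/biidealP => a b; have := closedLR (rshift _ a) (rshift _ b);
      rewrite !mem_catset /= !splitE.
  case: (set_0Vmem L) => [->|[a aL]]; first by rewrite eqxx.
  apply/orP; right; apply/eqP/setP => b; rewrite inE.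
  by have := closedLR (lshift _ a) (rshift _ b); rewrite !mem_catset /= !splitE orbN;
    apply.
move=> i j; rewrite -(splitK i) -(splitK j).
case: (split i) => a; case: (split j) => b; rewrite !mem_catset /= !splitE //.
- exact: closedL.
- move=> aL _; case/orP: LR => [/eqP L0|/eqP ->]; last by rewrite inE.
  by move: aL; rewrite L0 inE.
- exact: closedR.
Qed.

Definition hcross P (X Y : {set 'I_(ppn P)}) : nat :=
  (\sum_i \sum_j [&& i \in X, j \in Y, i != j & ph P i j])%N.

Lemma sum_mem_card (T : finType) (A : {set T}) : (\sum_(t : T) (t \in A))%N = #|A|.
Proof. by rewrite -sum1_card [RHS]big_mkcond; apply: eq_bigr => t _; case: (t \in A). Qed.

Lemma hcount_hcross P (I : {set 'I_(ppn P)}) : hcount I = hcross (~: I) I.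
Proof.
rewrite /hcount /hcross pair_bigA /= -sum_mem_card; apply: eq_bigr => -[i j] _.
by rewrite !inE /= !andbA.
Qed.

Lemma hcrossUl P (X Y Z : {set 'I_(ppn P)}) : [disjoint X & Y] ->
  hcross (X :|: Y) Z = (hcross X Z + hcross Y Z)%N.
Proof.
move=> dXY; rewrite /hcross -big_split; apply: eq_bigr => i _.
rewrite -big_split; apply: eq_bigr => j _ /=; rewrite inE.
by case: (boolP (i \in X)) => iX; rewrite ?(disjointFr dXY iX) ?addn0.
Qed.

Lemma hcrossUr P (X Y Z : {set 'I_(ppn P)}) : [disjoint Y & Z] ->
  hcross X (Y :|: Z) = (hcross X Y + hcross X Z)%N.
Proof.
move=> dYZ; rewrite /hcross -big_split; apply: eq_bigr => i _.
rewrite -big_split; apply: eq_bigr => j _ /=; rewrite inE.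
by case: (boolP (j \in Y)) => jY; rewrite ?(disjointFr dYZ jY) !andbF ?addn0.
Qed.

Lemma hcross_catset c x y (L L' : {set 'I_(ppn x)}) (R R' : {set 'I_(ppn y)}) :
  hcross (P := ppcat c x y) (catset L R) (catset L' R') =
  (hcross L L' + hcross R R' + c * #|L| * #|R'|)%N.
Proof.
rewrite /hcross big_split_ord /=.
under eq_bigr => i _ do rewrite big_split_ord /=.
under [X in (_ + X)%N]eq_bigr => i _ do rewrite big_split_ord /=.
rewrite !big_split /= [X in (_ + (X + _))%N]big1 => [|i _]; last first.
  by apply: big1 => j _; rewrite /= !splitE !andbF.
rewrite add0n addnAC; congr (_ + _ + _)%N.
- apply: eq_bigr => i _; apply: eq_bigr => j _.
  by rewrite !mem_catset /= !splitE (inj_eq (@lshift_inj _ _)).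
- apply: eq_bigr => i _; apply: eq_bigr => j _.
  by rewrite !mem_catset /= !splitE (inj_eq (@rshift_inj _ _)).
- rewrite -!sum_mem_card mulnAC big_distrr; apply: eq_bigr => i _ /=.
  rewrite mulnAC big_distrr; apply: eq_bigr => j _ /=.
  by rewrite !mem_catset /= !splitE eq_lrshift; case: c; case: (i \in L); case: (j \in R').
Qed.

Lemma hcount_catset c x y (L : {set 'I_(ppn x)}) (R : {set 'I_(ppn y)}) :
  hcount (P := ppcat c x y) (catset L R) =
  (hcount L + hcount R + c * #|~: L| * #|R|)%N.
Proof. by rewrite !hcount_hcross setC_catset hcross_catset. Qed.

Lemma hcount_set0 P : hcount (P := P) set0 = 0%N.
Proof. by rewrite hcount_hcross /hcross big1 // => i _; rewrite big1 // => j _; rewrite !inE. Qed.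

Lemma hcount_setT P : hcount (P := P) setT = 0%N.
Proof. by rewrite hcount_hcross /hcross big1 // => i _; rewrite big1 // => j _; rewrite !inE. Qed.

Lemma big_pair_cross (V : zmodType) (I J : finType) (A : pred I) (B : pred J)
    (a : I) (b : J) (F : I * J -> V) : A a -> B b ->
  \sum_(p | [&& A p.1, B p.2 & (p.1 == a) || (p.2 == b)]) F p =
  \sum_(i | A i) F (i, b) + \sum_(j | B j) F (a, j) - F (a, b).
Proof.
move=> Aa Bb; rewrite (bigID (fun p => p.2 == b)) /= -addrA; congr (_ + _).
  rewrite (eq_bigl (fun p => A p.1 && (p.2 == b))) => [|[i j] /=]; last first.
    by case: (j =P b) => [->|]; rewrite ?Bb ?orbT ?andbT ?andbF.
  transitivity (\sum_(i | A i) \sum_(j | j == b) F (i, j)).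
    by rewrite pair_big_dep; apply: eq_bigr => -[].
  by apply: eq_bigr => i _; rewrite big_pred1_eq.
rewrite (bigD1 b) //= [F (a, b) + _]addrC addrK.
rewrite (eq_bigl (fun p => (p.1 == a) && (B p.2 && (p.2 != b)))) => [|[i j] /=]; last first.
  by case: (i =P a) => [->|]; case: (j =P b); rewrite ?Aa ?andbF ?andbT.
transitivity (\sum_(i | i == a) \sum_(j | B j && (j != b)) F (i, j)).
  by rewrite pair_big_dep; apply: eq_bigr => -[].
by rewrite big_pred1_eq.
Qed.

Section Coefficients.
Variable K : fieldType.

Lemma coef2E (s : H2 K) Q1 Q2 :
  coef2 s Q1 Q2 = \sum_(t <- s) t.1 * (iso t.2.1 Q1 && iso t.2.2 Q2)%:R.
Proof. by apply: eq_bigr => t _; case: ifP; rewrite ?mulr1 ?mulr0. Qed.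

Lemma coef2_cat (s t : H2 K) Q1 Q2 :
  coef2 (s ++ t) Q1 Q2 = coef2 s Q1 Q2 + coef2 t Q1 Q2.
Proof. exact: big_cat. Qed.

Lemma coef2_seq1 (k : K) A B Q1 Q2 :
  coef2 [:: (k, (A, B))] Q1 Q2 = k * (iso A Q1 && iso B Q2)%:R.
Proof. by rewrite coef2E big_seq1. Qed.

Lemma coef2_map_Delta (q : K) P (g : K * (pp * pp) -> K * (pp * pp)) Q1 Q2 :
  coef2 (map g (Delta q P)) Q1 Q2 = \sum_(I | biideal (P := P) I)
    let t := g (q ^+ hcount I, (subpp (~: I), subpp I)) in
    t.1 * (iso t.2.1 Q1 && iso t.2.2 Q2)%:R.
Proof. by rewrite coef2E -map_comp big_map big_enum. Qed.

Lemma coef2_Delta (q : K) P Q1 Q2 :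
  coef2 (Delta q P) Q1 Q2 = \sum_(I | biideal (P := P) I)
     q ^+ hcount I * (iso (subpp (~: I)) Q1 && iso (subpp I) Q2)%:R.
Proof. by rewrite -[Delta q P]map_id coef2_map_Delta. Qed.

Section DeltaCat.
Variables (c : bool) (q : K) (x y Q1 Q2 : pp).
Local Notation P := (ppcat c x y).

Definition Delta_ppcat_term (p : {set 'I_(ppn x)} * {set 'I_(ppn y)}) : K :=
  let I : {set 'I_(ppn P)} := catset p.1 p.2 in
  q ^+ hcount I * (iso (subpp (~: I)) Q1 && iso (subpp I) Q2)%:R.

Lemma Delta_ppcat_term_l L : Delta_ppcat_term (L, setT) =
  q ^+ (hcount L + c * #|~: L| * ppn y) *
  (iso (subpp (~: L)) Q1 && iso (ppcat c (subpp L) y) Q2)%:R.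
Proof.
rewrite /Delta_ppcat_term /= hcount_catset hcount_setT addn0 cardsT card_ord.
rewrite setC_catset setCT.
rewrite -(iso_congr _ (iso_subpp_catset_l c y (emb_enum_val (~: L)) (enum_val_onto _))).
by rewrite -(iso_congr _ (iso_subpp_catset c (emb_enum_val L) (emb_id y)
                                          (enum_val_onto _) (@id_onto _))).
Qed.

Lemma Delta_ppcat_term_r R : Delta_ppcat_term (set0, R) =
  q ^+ (hcount R + c * ppn x * #|R|) *
  (iso (ppcat c x (subpp (~: R))) Q1 && iso (subpp R) Q2)%:R.
Proof.
rewrite /Delta_ppcat_term /= hcount_catset hcount_set0 add0n setC0 cardsT card_ord.
rewrite setC_catset setC0.
rewrite -(iso_congr _ (iso_subpp_catset c (emb_id x) (emb_enum_val (~: R))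
                                        (@id_onto _) (enum_val_onto _))).
by rewrite -(iso_congr _ (iso_subpp_catset_r c x (emb_enum_val R) (enum_val_onto _))).
Qed.

Lemma Delta_ppcat_term_lr : Delta_ppcat_term (set0, setT) =
  q ^+ (c * ppn x * ppn y) * (iso x Q1 && iso y Q2)%:R.
Proof.
rewrite /Delta_ppcat_term /= hcount_catset hcount_set0 hcount_setT add0n setC0.
rewrite !cardsT !card_ord setC_catset setC0 setCT.
rewrite -(iso_congr _ (iso_subpp_catset_l c y (emb_id x) (@id_onto _))).
by rewrite -(iso_congr _ (iso_subpp_catset_r c x (emb_id y) (@id_onto _))).
Qed.

Lemma coef2_Delta_ppcat : coef2 (Delta q P) Q1 Q2 =
   \sum_(L : {set 'I_(ppn x)} | biideal L) q ^+ (hcount L + c * #|~: L| * ppn y) *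
       (iso (subpp (~: L)) Q1 && iso (ppcat c (subpp L) y) Q2)%:R
 + \sum_(R : {set 'I_(ppn y)} | biideal R) q ^+ (hcount R + c * ppn x * #|R|) *
       (iso (ppcat c x (subpp (~: R))) Q1 && iso (subpp R) Q2)%:R
 - q ^+ (c * ppn x * ppn y) * (iso x Q1 && iso y Q2)%:R.
Proof.
rewrite coef2_Delta (reindex (fun p => catset p.1 p.2)) /=; last first.
  exact: onW_bij (catset_bij _ _).
rewrite (eq_bigl _ _ (fun p => biideal_catset c p.1 p.2)).
rewrite (eq_bigr Delta_ppcat_term) // big_pair_cross ?biideal_set0 ?biideal_setT //.
rewrite Delta_ppcat_term_lr; congr (_ + _ - _); apply: eq_bigr => S _.
  exact: Delta_ppcat_term_l.
exact: Delta_ppcat_term_r.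
Qed.

End DeltaCat.

Lemma Delta_ppmul (q : K) x y : eqH2 (Delta q (ppmul x y))
  ([seq (u.1, (u.2.1, ppmul u.2.2 y)) | u <- Delta q x]
   ++ [seq (u.1, (ppmul x u.2.1, u.2.2)) | u <- Delta q y]
   ++ [:: (-1, (x, y))]).
Proof.
move=> Q1 Q2 _ _; rewrite !coef2_cat !coef2_map_Delta coef2_seq1.
rewrite ppmul_ppcat coef2_Delta_ppcat mulN1r addrA /=; congr (_ + _ - _).
- by apply: eq_bigr => L _; rewrite mul0n addn0.
- by apply: eq_bigr => R _; rewrite !mul0n addn0.
- by rewrite !mul0n expr0 mul1r.
Qed.

Lemma Delta_pptl (q : K) x y : eqH2 (Delta q (pptl x y))
  ([seq (q ^+ (ppn u.2.1 * ppn y) * u.1, (u.2.1, pptl u.2.2 y)) | u <- Delta q x]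
   ++ [seq (q ^+ (ppn x * ppn u.2.2) * u.1, (pptl x u.2.1, u.2.2)) | u <- Delta q y]
   ++ [:: (- q ^+ (ppn x * ppn y), (x, y))]).
Proof.
move=> Q1 Q2 _ _; rewrite !coef2_cat !coef2_map_Delta coef2_seq1.
rewrite pptl_ppcat coef2_Delta_ppcat mulNr addrA /=; congr (_ + _ - _).
- by apply: eq_bigr => L _; rewrite mul1n addnC exprD.
- by apply: eq_bigr => R _; rewrite mul1n addnC exprD.
- by rewrite !mul1n.
Qed.

End Coefficients.

Section Derivation.
Variable K : fieldType.

Lemma coef2_DeltaL (D : pp -> H2 K) (s : H K) Q1 Q2 :
  coef2 (DeltaL D s) Q1 Q2 = \sum_(t <- s) t.1 * coef2 (D t.2) Q1 Q2.
Proof.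
rewrite /DeltaL coef2E big_flatten big_map; apply: eq_bigr => t _.
by rewrite big_map coef2E mulr_sumr; apply: eq_bigr => u _; rewrite mulrA.
Qed.

Lemma eq_bigr_all (T : Type) (p : pred T) (s : seq T) (F G : T -> K) :
  all p s -> (forall t, p t -> F t = G t) -> \sum_(t <- s) F t = \sum_(t <- s) G t.
Proof.
move=> ps eqFG; elim: s ps => [|t s IHs] /=; first by rewrite !big_nil.
by case/andP=> pt ps; rewrite !big_cons eqFG // IHs.
Qed.

Lemma infinitesimal_rule_linear (D : pp -> H2 K) (mul : pp -> pp -> pp) :
  (forall x y, plane x -> plane y ->
     eqH2 (D (mul x y))
          ([seq (u.1, (u.2.1, mul u.2.2 y)) | u <- D x]
           ++ [seq (u.1, (mul x u.2.1, u.2.2)) | u <- D y]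
           ++ [:: (-1, (x, y))])) ->
  forall a b : H K, inH a -> inH b ->
    eqH2 (DeltaL D [seq (u.1 * v.1, mul u.2 v.2) | u <- a, v <- b])
         ([seq (u.1 * v.1, (u.2.1, mul u.2.2 v.2)) | u <- DeltaL D a, v <- b]
          ++ [seq (u.1 * v.1, (mul u.2 v.2.1, v.2.2)) | u <- a, v <- DeltaL D b]
          ++ [seq (- (u.1 * v.1), (u.2, v.2)) | u <- a, v <- b]).
Proof.
move=> ruleD a b planea planeb Q1 Q2 p1 p2.
rewrite coef2_DeltaL big_allpairs_dep /=.
rewrite (eq_bigr_all planea (G := fun t => \sum_(v <- b) t.1 * v.1 *
   (coef2 [seq (u.1, (u.2.1, mul u.2.2 v.2)) | u <- D t.2] Q1 Q2 +
    coef2 [seq (u.1, (mul t.2 u.2.1, u.2.2)) | u <- D v.2] Q1 Q2 +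
    coef2 [:: (-1, (t.2, v.2))] Q1 Q2))); last first.
  move=> t planet; apply: (eq_bigr_all planeb) => v planev /=.
  by rewrite ruleD // !coef2_cat addrA.
under eq_bigr => t _ do under eq_bigr => v _ do rewrite !mulrDr.
under eq_bigr => t _ do rewrite !big_split /=.
rewrite !big_split /= !coef2_cat addrA; congr (_ + _ + _).
- rewrite coef2E big_allpairs_dep /DeltaL big_flatten big_map /=.
  apply: eq_bigr => t _; rewrite big_map /= exchange_big /=.
  apply: eq_bigr => v _; rewrite coef2E big_map mulr_sumr.
  by apply: eq_bigr => w _ /=; rewrite !mulrA [_ * v.1 * w.1]mulrAC.
- rewrite coef2E big_allpairs_dep /=.
  apply: eq_bigr => t _; rewrite /DeltaL big_flatten big_map /=.
  apply: eq_bigr => v _; rewrite coef2E !big_map mulr_sumr.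
  by apply: eq_bigr => w _ /=; rewrite !mulrA.
- rewrite coef2E big_allpairs_dep /=.
  apply: eq_bigr => t _; apply: eq_bigr => v _.
  by rewrite coef2_seq1 mulN1r mulrN mulNr.
Qed.

End Derivation.

Section Restriction.
Variables (P : pp) (S : {set 'I_(ppn P)}).
Local Notation SP := (subpp S).

(* [restr T] is [S ∩ T] in the coordinates of [subpp S]. *)
Definition restr (T : {set 'I_(ppn P)}) : {set 'I_(ppn SP)} :=
  [set j : 'I_#|S| | enum_val j \in T].

Lemma setC_restr T : ~: restr T = restr (~: T).
Proof. by apply/setP => j; rewrite !inE. Qed.

Lemma enum_val_restr T : enum_val @: restr T = S :&: T.
Proof.
apply/setP => z; rewrite inE; apply/imsetP/andP.
  by case=> j; rewrite inE => jT ->; split=> //; exact: enum_valP.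
by case=> zS zT; exists (enum_rank_in zS z); rewrite ?inE enum_rankK_in.
Qed.

Lemma restr_enum_val (J : {set 'I_(ppn SP)}) : restr (enum_val @: J) = J.
Proof.
apply/setP => j; rewrite inE; apply/imsetP/idP => [[i iJ /enum_val_inj ->]|] //.
by move=> jJ; exists j.
Qed.

Lemma iso_subpp_restr T : iso (subpp (restr T)) (subpp (S :&: T)).
Proof.
apply: (iso_subpp (emb_comp (emb_enum_val (restr T)) (emb_enum_val S))).
move=> z; rewrite inE; split=> [/andP[zS zT]|[i ->]].
  have jT : enum_rank_in zS z \in restr T by rewrite inE enum_rankK_in.
  by exists (enum_rank_in jT (enum_rank_in zS z)); rewrite /= !enum_rankK_in.
by rewrite /= enum_valP; have := enum_valP i; rewrite inE.
Qed.

Lemma biideal_restrP (T : {set 'I_(ppn P)}) :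
  reflect (forall a b, a \in S -> b \in S -> a \in T -> ph P a b || pr P a b -> b \in T)
          (biideal (restr T)).
Proof.
apply: (iffP (biidealP (restr T))) => [closedT a b aS bS aT ab|closedT i j].
  have := closedT (enum_rank_in aS a) (enum_rank_in bS b).
  by rewrite /= !inE !enum_rankK_in //; apply.
by rewrite !inE; apply: closedT; exact: enum_valP.
Qed.

Lemma hcount_restr T : hcount (restr T) = hcross (S :&: ~: T) (S :&: T).
Proof.
rewrite hcount_hcross /hcross.
transitivity (\sum_(a in S) \sum_(b in S)
                 [&& a \notin T, b \in T, a != b & ph P a b])%N.
  rewrite [RHS]big_enum_val; apply: eq_bigr => i _.
  rewrite [RHS]big_enum_val; apply: eq_bigr => j _.
  by rewrite !inE (inj_eq enum_val_inj).
rewrite big_mkcond; apply: eq_bigr => a _; rewrite big_mkcond /=.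
case: (boolP (a \in S)) => aS; last by rewrite big1 // => b _; rewrite inE (negPf aS).
apply: eq_bigr => b _.
by case: (boolP (b \in S)) => bS; rewrite !inE ?aS ?bS ?(negPf bS) ?andbF.
Qed.

Lemma big_biideal_subpp (V : zmodType) (F : {set 'I_(ppn SP)} -> V) :
  \sum_(J | biideal J) F J =
  \sum_(T : {set 'I_(ppn P)} | biideal (restr T) && (T \subset S)) F (restr T).
Proof.
rewrite (reindex_onto restr (fun J => enum_val @: J)) => [|J _]; last first.
  exact: restr_enum_val.
apply: eq_bigl => T; rewrite enum_val_restr; congr andb; apply/eqP/idP.
  by move=> <-; exact: subsetIl.
by move/setIidPr.
Qed.

End Restriction.

Lemma biideal_restr_compl P (I T : {set 'I_(ppn P)}) : biideal I ->
  T \subset ~: I -> biideal (restr (~: I) T) = biideal (T :|: I).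
Proof.
move=> /biidealP closedI sTI; apply/biideal_restrP/biidealP => closedT.
  move=> a b; rewrite !inE => /orP[aT|aI] ab; last by rewrite (closedI a b aI ab) orbT.
  case: (boolP (b \in I)) => bI; first by rewrite orbT.
  by rewrite (closedT a b (subsetP sTI a aT)) // inE.
move=> a b _; rewrite inE => /negPf bI aT ab.
by have := closedT a b; rewrite !inE aT bI orbF; apply.
Qed.

Lemma biideal_restr_sub P (I T : {set 'I_(ppn P)}) : biideal I ->
  T \subset I -> biideal (restr I T) = biideal T.
Proof.
move=> /biidealP closedI sTI; apply/biideal_restrP/biidealP => closedT.
  by move=> a b aT ab; have aI := subsetP sTI a aT; exact: closedT (closedI a b aI ab) aT ab.
by move=> a b _ _; exact: closedT.
Qed.

Lemma exchange_nested_biideals (V : zmodType) (T0 : finType) (bi : pred {set T0})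
    (F : {set T0} -> {set T0} -> {set T0} -> V) :
  \sum_(I | bi I) \sum_(T | bi (T :|: I) && (T \subset ~: I)) F (~: (T :|: I)) T I
  = \sum_(I | bi I) \sum_(T | bi T && (T \subset I)) F (~: I) (I :&: ~: T) T.
Proof.
symmetry; rewrite (exchange_big_dep bi) /=; last by move=> I T _ /andP[].
apply: eq_bigr => C biC.
rewrite (reindex_onto (fun B => B :|: C) (fun I => I :&: ~: C)); last first.
  move=> I /andP[_ /andP[_ CI]].
  by rewrite setUIl [~: C :|: C]setUC setUCr setIT; apply/setUidPl.
apply: eq_big => [B|B /andP[_ /eqP ->]] //.
rewrite biC subsetUr /= andbT setIUl setICr setU0; congr andb.
by apply/eqP/idP => [<-|/setIidPl]; [exact: subsetIr|].
Qed.

Section Coassociativity.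
Variable K : fieldType.

Lemma coef3_DeltaId (D : pp -> H2 K) (s : H2 K) Q1 Q2 Q3 :
  coef3 (DeltaId D s) Q1 Q2 Q3 = \sum_(t <- s) t.1 *
     \sum_(u <- D t.2.1) u.1 * ([&& iso u.2.1 Q1, iso u.2.2 Q2 & iso t.2.2 Q3])%:R.
Proof.
rewrite /coef3 /DeltaId big_flatten big_map; apply: eq_bigr => t _.
rewrite big_map mulr_sumr; apply: eq_bigr => u _ /=.
by case: ifP; rewrite ?mulr1 ?mulr0 ?mulrA.
Qed.

Lemma coef3_IdDelta (D : pp -> H2 K) (s : H2 K) Q1 Q2 Q3 :
  coef3 (IdDelta D s) Q1 Q2 Q3 = \sum_(t <- s) t.1 *
     \sum_(u <- D t.2.2) u.1 * ([&& iso t.2.1 Q1, iso u.2.1 Q2 & iso u.2.2 Q3])%:R.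
Proof.
rewrite /coef3 /IdDelta big_flatten big_map; apply: eq_bigr => t _.
rewrite big_map mulr_sumr; apply: eq_bigr => u _ /=.
by case: ifP; rewrite ?mulr1 ?mulr0 ?mulrA.
Qed.

Lemma coef3_DeltaId_DeltaL (D : pp -> H2 K) (s : H K) Q1 Q2 Q3 :
  coef3 (DeltaId D (DeltaL D s)) Q1 Q2 Q3 =
  \sum_(t <- s) t.1 * coef3 (DeltaId D (D t.2)) Q1 Q2 Q3.
Proof.
rewrite coef3_DeltaId /DeltaL big_flatten big_map; apply: eq_bigr => t _.
by rewrite big_map coef3_DeltaId mulr_sumr; apply: eq_bigr => w _; rewrite mulrA.
Qed.

Lemma coef3_IdDelta_DeltaL (D : pp -> H2 K) (s : H K) Q1 Q2 Q3 :
  coef3 (IdDelta D (DeltaL D s)) Q1 Q2 Q3 =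
  \sum_(t <- s) t.1 * coef3 (IdDelta D (D t.2)) Q1 Q2 Q3.
Proof.
rewrite coef3_IdDelta /DeltaL big_flatten big_map; apply: eq_bigr => t _.
by rewrite big_map coef3_IdDelta mulr_sumr; apply: eq_bigr => w _; rewrite mulrA.
Qed.

Lemma big_Delta (q : K) P (F : K * (pp * pp) -> K) :
  \sum_(u <- Delta q P) F u =
  \sum_(I | biideal (P := P) I) F (q ^+ hcount I, (subpp (~: I), subpp I)).
Proof. by rewrite big_map big_enum. Qed.

Section Chains.
Variables (q : K) (P Q1 Q2 Q3 : pp).

Definition chain_term (A B C : {set 'I_(ppn P)}) : K :=
  q ^+ (hcross A B + hcross A C + hcross B C) *
  ([&& iso (subpp A) Q1, iso (subpp B) Q2 & iso (subpp C) Q3])%:R.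

Lemma DeltaId_term (I : {set 'I_(ppn P)}) : biideal I ->
  q ^+ hcount I * \sum_(u <- Delta q (subpp (~: I))) u.1 *
     ([&& iso u.2.1 Q1, iso u.2.2 Q2 & iso (subpp I) Q3])%:R =
  \sum_(T | biideal (T :|: I) && (T \subset ~: I)) chain_term (~: (T :|: I)) T I.
Proof.
move=> biI; rewrite big_Delta big_biideal_subpp mulr_sumr.
apply: eq_big => [T|T /andP[_ sTI]].
  by case: (boolP (T \subset ~: I)) => sTI; rewrite ?andbF ?biideal_restr_compl.
rewrite setC_restr /= (iso_congr Q1 (iso_subpp_restr _ _)).
rewrite (iso_congr Q2 (iso_subpp_restr _ _)) hcount_restr.
have -> : ~: I :&: T = T by apply/setIidPr.
have -> : ~: I :&: ~: T = ~: (T :|: I) by rewrite setCU setIC.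
have partI : ~: I = ~: (T :|: I) :|: T.
  by rewrite setCU setUIl [~: T :|: T]setUC setUCr setTI; apply/esym/setUidPl.
have disjI : [disjoint ~: (T :|: I) & T].
  by rewrite -setI_eq0 setCU setIC setIA setICr set0I.
by rewrite mulrA -exprD hcount_hcross {1}partI hcrossUl // addnC addnA.
Qed.

Lemma IdDelta_term (I : {set 'I_(ppn P)}) : biideal I ->
  q ^+ hcount I * \sum_(u <- Delta q (subpp I)) u.1 *
     ([&& iso (subpp (~: I)) Q1, iso u.2.1 Q2 & iso u.2.2 Q3])%:R =
  \sum_(T | biideal T && (T \subset I)) chain_term (~: I) (I :&: ~: T) T.
Proof.
move=> biI; rewrite big_Delta big_biideal_subpp mulr_sumr.
apply: eq_big => [T|T /andP[_ sTI]].
  by case: (boolP (T \subset I)) => sTI; rewrite ?andbF ?biideal_restr_sub.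
rewrite setC_restr /= (iso_congr Q2 (iso_subpp_restr _ _)).
rewrite (iso_congr Q3 (iso_subpp_restr _ _)) hcount_restr.
have -> : I :&: T = T by apply/setIidPr.
have partI : I = (I :&: ~: T) :|: T.
  by rewrite setUIl [~: T :|: T]setUC setUCr setIT; apply/esym/setUidPl.
have disjI : [disjoint I :&: ~: T & T].
  by rewrite -setI_eq0 setIAC -setIA setICr setI0.
by rewrite mulrA -exprD hcount_hcross {2}partI hcrossUr.
Qed.

Lemma coassoc_Delta_pp :
  coef3 (DeltaId (Delta q) (Delta q P)) Q1 Q2 Q3 =
  coef3 (IdDelta (Delta q) (Delta q P)) Q1 Q2 Q3.
Proof.
rewrite coef3_DeltaId coef3_IdDelta !big_Delta /=.
rewrite (eq_bigr _ (fun I biI => DeltaId_term biI)).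
rewrite (eq_bigr _ (fun I biI => IdDelta_term biI)).
exact: exchange_nested_biideals.
Qed.

End Chains.

Lemma coassoc_Delta (q : K) : coassociative (Delta q).
Proof.
move=> s _ Q1 Q2 Q3 _ _ _; rewrite coef3_DeltaId_DeltaL coef3_IdDelta_DeltaL.
by apply: eq_bigr => t _; rewrite coassoc_Delta_pp.
Qed.

End Coassociativity.

Theorem theorem7 (K : fieldType) (q : K) :
  [/\ coassociative (Delta q),
      forall x y : pp, plane x -> plane y ->
        eqH2 (Delta q (ppmul x y))
             ([seq (u.1, (u.2.1, ppmul u.2.2 y)) | u <- Delta q x]
              ++ [seq (u.1, (ppmul x u.2.1, u.2.2)) | u <- Delta q y]
              ++ [:: (-1, (x, y))]),
      forall x y : pp, plane x -> plane y ->
        eqH2 (Delta q (pptl x y))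
             ([seq (q ^+ (ppn u.2.1 * ppn y) * u.1, (u.2.1, pptl u.2.2 y))
              | u <- Delta q x]
              ++ [seq (q ^+ (ppn x * ppn u.2.2) * u.1, (pptl x u.2.1, u.2.2))
                 | u <- Delta q y]
              ++ [:: (- q ^+ (ppn x * ppn y), (x, y))]),
      infinitesimal_hopf ppmul pp1 (Delta q) &
      infinitesimal_hopf pptl pp1 (Delta (1 : K))].
Proof.
have Delta1_pptl x y : plane x -> plane y ->
    eqH2 (Delta (1 : K) (pptl x y))
         ([seq (u.1, (u.2.1, pptl u.2.2 y)) | u <- Delta 1 x]
          ++ [seq (u.1, (pptl x u.2.1, u.2.2)) | u <- Delta 1 y]
          ++ [:: (-1, (x, y))]).
  move=> _ _ Q1 Q2 p1 p2; rewrite Delta_pptl // !coef2_cat expr1n.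
  by congr (_ + (_ + _)); congr coef2; apply: eq_map => u; rewrite expr1n mul1r.
split=> [|x y _ _|x y _ _||]; first exact: coassoc_Delta.
- exact: Delta_ppmul.
- exact: Delta_pptl.
- split=> [P Q R _ _ _|P _||]; first exact: ppcat_assoc.
  + by split; [exact: ppcat_unitl | exact: ppcat_unitr].
  + exact: coassoc_Delta.
  + by apply: infinitesimal_rule_linear => x y _ _; exact: Delta_ppmul.
- split=> [P Q R _ _ _|P _||]; first exact: ppcat_assoc.
  + by split; [exact: ppcat_unitl | exact: ppcat_unitr].
  + exact: coassoc_Delta.
  + exact: infinitesimal_rule_linear.
Qed.
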